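(* For any positive constants $C_1,C_2,C_3$ there exist positive constants $\gamma,\delta,N_0$ such that the following holds for all $n>N_0$. Let $\rho$ be a positive function on $\mathbb N$ with $\rho(n)>n^{-1}$, and let $\varphi_n$ be a positive function on $\mathbb N$ with $$\sum_{k=1}^n\varphi_n(k)<C_1\,n\rho(n).$$ Let $(\Omega,\mathcal F,\mathbb P)$ be a probability space and $V_1,\dots,V_n$ events such that \begin{enumerate} \item $C_2^{-1}\rho(n)\leq\mathbb P(V_l)<C_2\rho(n)$ for all $l=1,\dots,n$; \item $\mathbb P(V_k\cap V_j)<C_3\,\rho(n)\,\varphi_n(|k-j|)$ for all $k\neq j$. \end{enumerate} Then $$\mathbb P\left(\left\{\sum_{l=1}^n\mathbb I_{V_l}>\gamma\,n\rho(n)\right\}\right)>\delta.$$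
   Context: $\mathbb I_V$ denotes the indicator function of the event $V$. *)

From HB Require Import structures.
From mathcomp Require Import all_boot all_order all_algebra.
From mathcomp Require Import all_classical all_reals all_analysis.
Set Implicit Arguments. Unset Strict Implicit. Unset Printing Implicit Defensive.

From HB Require Import structures.
From mathcomp Require Import all_boot all_order all_algebra.
From mathcomp Require Import all_classical all_reals all_analysis.
From mathcomp Require Import measurable_realfun.
From mathcomp Require Import zify ring lra.
Import Order.TTheory GRing.Theory Num.Theory.
Local Open Scope classical_set_scope.
Local Open Scope ring_scope.

(* Second-moment method for S = \sum_l 1_(V l).  Integrating the pointwise
   bound 2tS <= 2ta + t^2 S^2 + 1_(S > a) gives, for every t >= 0,
   P(S > a) >= 2t (E S - a) - t^2 E S^2, hence P(S > a) >= a^2 / M as soon as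
   E S >= 2a and E S^2 <= M (take t = a / M).  Hypothesis 1 gives
   E S >= n rho / C2; since E S^2 = \sum_(k, j) P(V k /\ V j), hypotheses 1 and 2
   together with \sum phi < C1 n rho and n rho > 1 give
   E S^2 <= (C2 + 2 C1 C3) (n rho)^2.  With a = n rho / (2 C2) this yields
   P(S > a) >= 1 / (4 C2^2 (C2 + 2 C1 C3)). *)

Section distance_sums.
Context {R : realType} {phi : nat -> R}.
Hypothesis phi_ge0 : forall m, 0 <= phi m.

Lemma sum_nat1_widen a b : (a <= b)%N ->
  \sum_(1 <= m < a) phi m <= \sum_(1 <= m < b) phi m.
Proof.
move=> ab; have [a_le1|a_gt1] := leqP a 1; first by rewrite big_geq // sumr_ge0.
rewrite [leRHS](big_cat_nat _ (n := a)) //=; last exact: ltnW.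
by rewrite lerDl sumr_ge0.
Qed.

Lemma sum_dist_below n k : (k <= n.+1)%N ->
  \sum_(1 <= j < k) phi (k - j)%N <= \sum_(1 <= m < n.+1) phi m.
Proof.
move=> kn; rewrite big_nat_rev (eq_big_nat _ _ (F2 := phi)).
  exact: sum_nat1_widen.
by move=> i /andP[i1 ik]; congr phi; lia.
Qed.

Lemma sum_dist_above n k :
  \sum_(k.+1 <= j < n.+1) phi (j - k)%N <= \sum_(1 <= m < n.+1) phi m.
Proof.
rewrite -(add1n k) big_addn (eq_big_nat _ _ (F2 := phi)).
  by apply: sum_nat1_widen; lia.
by move=> i /andP[i1 ik]; congr phi; lia.
Qed.

Lemma double_sum_dist_le (f : nat -> nat -> R) n (c2 c3 : R) : 0 <= c3 ->
  (forall k, (1 <= k <= n)%N -> f k k <= c2) ->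
  (forall k j, (1 <= k <= n)%N -> (1 <= j <= n)%N -> k <> j ->
     f k j <= c3 * phi `|(k%:Z - j%:Z)|%N) ->
  \sum_(1 <= k < n.+1) \sum_(1 <= j < n.+1) f k j
    <= n%:R * (c2 + 2 * c3 * \sum_(1 <= m < n.+1) phi m).
Proof.
move=> c3_ge0 f_diag f_off; set Phi := \sum_(1 <= m < n.+1) phi m.
have -> : n%:R * (c2 + 2 * c3 * Phi) = \sum_(1 <= k < n.+1) (c2 + 2 * c3 * Phi).
  by rewrite sumr_const_nat subn1 mulr_natl.
apply: ler_sum_nat => k /andP[k1 kn].
rewrite [leLHS](big_cat_nat _ (n := k)) //=; last by lia.
rewrite [X in _ + X <= _]big_ltn //.
have below : \sum_(1 <= j < k) f k j <= c3 * Phi.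
  apply: le_trans (_ : \sum_(1 <= j < k) c3 * phi (k - j)%N <= _).
    apply: ler_sum_nat => j /andP[j1 jk]; rewrite -(distnEl (ltnW jk)).
    apply: f_off; lia.
  by rewrite -mulr_sumr ler_wpM2l // sum_dist_below //; lia.
have above : \sum_(k.+1 <= j < n.+1) f k j <= c3 * Phi.
  apply: le_trans (_ : \sum_(k.+1 <= j < n.+1) c3 * phi (j - k)%N <= _).
    apply: ler_sum_nat => j /andP[kj jn]; rewrite -(distnEr (ltnW kj)).
    apply: f_off; lia.
  by rewrite -mulr_sumr ler_wpM2l // sum_dist_above.
have diag : f k k <= c2 by apply: f_diag; lia.
lra.
Qed.

End distance_sums.

Lemma le_quadratic_tail (R : realFieldType) (a t x : R) : 0 <= a -> 0 <= t ->
  2 * t * x <= 2 * t * a + t ^+ 2 * x ^+ 2 + (a < x)%R%:R.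
Proof.
move=> a_ge0 t_ge0; have [ax|xa] := ltrP a x.
- have : 0 <= (t * x - 1) ^+ 2 by exact: sqr_ge0.
  have : 0 <= t * a by exact: mulr_ge0.
  rewrite /= mulr1n; nra.
- have : 0 <= t * (a - x) by rewrite mulr_ge0 // subr_ge0.
  have : 0 <= t ^+ 2 * x ^+ 2 by rewrite mulr_ge0 ?sqr_ge0.
  rewrite /= mulr0n; lra.
Qed.

Section indicator_sums.
Context {d} {T : measurableType d} {R : realType} {I : Type} {A : I -> set T}.
Hypothesis mA : forall i, measurable (A i).

Lemma sum_indic_ge0 (s : seq I) w : 0 <= \sum_(i <- s) \1_(A i) w :> R.
Proof. by apply: sumr_ge0 => i _; rewrite indicE ler0n. Qed.

Lemma measurable_sum_indic (s : seq I) :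
  measurable_fun setT (fun w => \sum_(i <- s) \1_(A i) w : R).
Proof. by apply: measurable_sum => i; exact: measurable_indic. Qed.

Lemma measurable_sum_indic_gt (s : seq I) (a : R) :
  measurable [set w | a < \sum_(i <- s) \1_(A i) w].
Proof.
have := measurable_sum_indic s measurableT _ (measurable_itv `]a, +oo[).
rewrite setTI; congr measurable; apply/seteqP.
by split => w /=; rewrite in_itv /= andbT.
Qed.

Lemma integral_sum_indic (mu : {measure set T -> \bar R}) (s : seq I) :
  (\int[mu]_x (\sum_(i <- s) \1_(A i) x)%:E = \sum_(i <- s) mu (A i))%E.
Proof.
under eq_integral do rewrite -sumEFin.
rewrite ge0_integral_sum //; last first.
  by move=> i; apply/measurable_EFinP; exact: measurable_indic.
by apply: eq_bigr => i _; rewrite integral_indic // setIT.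
Qed.

Lemma sqr_sum_indic (s : seq I) w :
  (\sum_(i <- s) \1_(A i) w) ^+ 2
    = \sum_(k <- s) \sum_(j <- s) \1_(A k `&` A j) w :> R.
Proof.
rewrite expr2 big_distrlr /=; apply: eq_bigr => k _; apply: eq_bigr => j _.
by rewrite indicI.
Qed.

End indicator_sums.

Lemma integral_sqr_sum_indic d (T : measurableType d) (R : realType)
    (mu : {measure set T -> \bar R}) (I : Type) (A : I -> set T) (s : seq I) :
  (forall i, measurable (A i)) ->
  (\int[mu]_x ((\sum_(i <- s) \1_(A i) x) ^+ 2)%:E
    = \sum_(k <- s) \sum_(j <- s) mu (A k `&` A j))%E.
Proof.
move=> mA; under eq_integral => x _.
  rewrite sqr_sum_indic -(big_allpairs (F := fun p => \1_(A p.1 `&` A p.2) x)).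
  over.
rewrite integral_sum_indic; last by move=> p; exact: measurableI.
by rewrite big_allpairs.
Qed.

Section ge0_integral_EFin.
Context {d} {T : measurableType d} {R : realType} (mu : {measure set T -> \bar R}).
Context {f g : T -> R}.
Hypotheses (f_ge0 : forall x, 0 <= f x) (mf : measurable_fun setT f).

Lemma ge0_integral_EFinD : (forall x, 0 <= g x) -> measurable_fun setT g ->
  (\int[mu]_x (f x + g x)%:E = \int[mu]_x (f x)%:E + \int[mu]_x (g x)%:E)%E.
Proof.
move=> g_ge0 mg; under eq_integral do rewrite EFinD.
rewrite ge0_integralD // => [x _||x _|]; rewrite ?lee_fin //.
all: exact/measurable_EFinP.
Qed.

Lemma ge0_integral_EFinZl (k : R) : 0 <= k ->
  (\int[mu]_x (k * f x)%:E = k%:E * \int[mu]_x (f x)%:E)%E.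
Proof.
move=> k_ge0; under eq_integral do rewrite EFinM.
rewrite ge0_integralZl_EFin // => [x _|]; rewrite ?lee_fin //.
exact/measurable_EFinP.
Qed.

End ge0_integral_EFin.

Lemma fineK_probability d (T : measurableType d) (R : realType)
    (P : probability T R) (B : set T) :
  measurable B -> (fine (P B))%:E = P B.
Proof. by move=> mB; rewrite fineK // fin_num_measure. Qed.

Section second_moment.
Context {d} {T : measurableType d} {R : realType} (P : probability T R).
Context {I : Type} (s : seq I) {A : I -> set T}.
Hypothesis mA : forall i, measurable (A i).

Let S w : R := \sum_(i <- s) \1_(A i) w.

Lemma integral_sum_indic_fine :
  (\int[P]_x (S x)%:E = (\sum_(i <- s) fine (P (A i)))%:E)%E.
Proof.
rewrite integral_sum_indic // -sumEFin.
by apply: eq_bigr => i _; rewrite fineK_probability.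
Qed.

Lemma integral_sqr_sum_indic_fine :
  (\int[P]_x (S x ^+ 2)%:E
    = (\sum_(k <- s) \sum_(j <- s) fine (P (A k `&` A j)))%:E)%E.
Proof.
rewrite integral_sqr_sum_indic // -sumEFin; apply: eq_bigr => k _.
rewrite -sumEFin; apply: eq_bigr => j _.
by rewrite fineK_probability //; exact: measurableI.
Qed.

Lemma second_moment_tail (a t : R) : 0 <= a -> 0 <= t ->
  2 * t * (\sum_(i <- s) fine (P (A i)) - a)
    - t ^+ 2 * \sum_(k <- s) \sum_(j <- s) fine (P (A k `&` A j))
  <= fine (P [set w | a < S w]).
Proof.
move=> a_ge0 t_ge0; pose E := [set w | a < S w].
have mE : measurable E := measurable_sum_indic_gt mA s a.
have mS : measurable_fun setT S := measurable_sum_indic mA s.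
have S2_ge0 x : 0 <= S x ^+ 2 := sqr_ge0 (S x).
have mS2 : measurable_fun setT (fun x => S x ^+ 2) := measurable_funX 2 mS.
have tS2_ge0 x : 0 <= t ^+ 2 * S x ^+ 2 by rewrite mulr_ge0 ?sqr_ge0.
have mtS2 : measurable_fun setT (fun x => t ^+ 2 * S x ^+ 2).
  by apply: measurable_funM => //; exact: measurable_cst.
have quad_ge0 x : 0 <= 2 * t * a + t ^+ 2 * S x ^+ 2.
  by apply: addr_ge0 => //; rewrite !mulr_ge0.
have mquad : measurable_fun setT (fun x => 2 * t * a + t ^+ 2 * S x ^+ 2).
  by apply: measurable_funD => //; exact: measurable_cst.
have indic_ge0 x : 0 <= \1_E x :> R by rewrite indicE ler0n.
have mE1 : measurable_fun setT (\1_E : T -> R) by exact: measurable_indic.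
have int_lin : (\int[P]_x (2 * t * S x)%:E
    = (2 * t)%:E * (\sum_(i <- s) fine (P (A i)))%:E)%E.
  by rewrite ge0_integral_EFinZl ?mulr_ge0 ?integral_sum_indic_fine // => x;
    exact: sum_indic_ge0.
have int_quad : (\int[P]_x (2 * t * a + t ^+ 2 * S x ^+ 2 + \1_E x)%:E
    = (2 * t * a)%:E + (t ^+ 2)%:E
        * (\sum_(k <- s) \sum_(j <- s) fine (P (A k `&` A j)))%:E + P E)%E.
  rewrite (ge0_integral_EFinD _ quad_ge0 mquad indic_ge0 mE1).
  rewrite ge0_integral_EFinD //; last by move=> _; rewrite !mulr_ge0.
  rewrite integral_cst // (ge0_integral_EFinZl _ S2_ge0 mS2) ?sqr_ge0 //.
  rewrite integral_sqr_sum_indic_fine integral_indic // setIT.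
  by rewrite [X in (_ * X)%E](_ : _ = 1%E) ?mule1 //; exact: probability_setT.
have : (2 * t * \sum_(i <- s) fine (P (A i))
    <= 2 * t * a + t ^+ 2 * \sum_(k <- s) \sum_(j <- s) fine (P (A k `&` A j))
       + fine (P E)).
  rewrite -lee_fin !EFinD !EFinM fineK_probability // -int_lin -int_quad.
  apply: ge0_le_integral => //.
  - by move=> x _; rewrite lee_fin !mulr_ge0 // sum_indic_ge0.
  - by apply/measurable_EFinP; apply: measurable_funM => //; exact: measurable_cst.
  - by apply/measurable_EFinP; exact: measurable_funD.
  - by move=> x _; rewrite lee_fin indicE /E mem_setE le_quadratic_tail.
lra.
Qed.

Lemma second_moment_method (a m2 : R) : 0 < a -> 0 < m2 ->
  2 * a <= \sum_(i <- s) fine (P (A i)) ->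
  \sum_(k <- s) \sum_(j <- s) fine (P (A k `&` A j)) <= m2 ->
  a ^+ 2 / m2 <= fine (P [set w | a < S w]).
Proof.
move=> a_gt0 m2_gt0 first_moment second_moment.
have t_ge0 : 0 <= a / m2 by rewrite divr_ge0 ?ltW.
apply: le_trans _ (second_moment_tail _ _ (ltW a_gt0) t_ge0).
have lin : a / m2 * a <= a / m2 * (\sum_(i <- s) fine (P (A i)) - a).
  by rewrite ler_wpM2l //; lra.
have quad := ler_wpM2l (sqr_ge0 (a / m2)) second_moment.
have -> : a ^+ 2 / m2 = 2 * (a / m2 * a) - (a / m2) ^+ 2 * m2.
  by field; rewrite gt_eqF.
lra.
Qed.

End second_moment.

Section correlated_events.
Context {d} {T : measurableType d} {R : realType} {P : probability T R}.
Context {V : nat -> set T} {n : nat} {r C2 C3 : R} {phi : nat -> R}.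
Hypothesis mV : forall l, measurable (V l).
Hypothesis PV : forall l, (1 <= l <= n)%N ->
  ((C2^-1 * r)%:E <= P (V l))%E /\ (P (V l) < (C2 * r)%:E)%E.
Hypothesis PVV : forall k j, (1 <= k <= n)%N -> (1 <= j <= n)%N -> k <> j ->
  (P (V k `&` V j) < (C3 * r * phi `|(k%:Z - j%:Z)|%N)%:E)%E.

Lemma sum_prob_ge : n%:R * (C2^-1 * r) <= \sum_(1 <= l < n.+1) fine (P (V l)).
Proof.
have -> : n%:R * (C2^-1 * r) = \sum_(1 <= l < n.+1) C2^-1 * r.
  by rewrite sumr_const_nat subn1 mulr_natl.
by apply: ler_sum_nat => l /PV[+ _]; rewrite -fineK_probability // lee_fin.
Qed.

Lemma sum_prob_pair_le (C1 : R) : 0 <= C2 -> 0 <= C3 -> 0 <= r ->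
  (forall k, 0 <= phi k) -> 1 <= n%:R * r ->
  \sum_(1 <= k < n.+1) phi k <= C1 * (n%:R * r) ->
  \sum_(1 <= k < n.+1) \sum_(1 <= j < n.+1) fine (P (V k `&` V j))
    <= (C2 + 2 * C1 * C3) * (n%:R * r) ^+ 2.
Proof.
move=> C2_ge0 C3_ge0 r_ge0 phi_ge0 c_ge1 phi_sum.
have mVV k j : measurable (V k `&` V j) := measurableI _ _ (mV k) (mV j).
apply: le_trans (double_sum_dist_le phi_ge0 _ n (C2 * r) (C3 * r) _ _ _) _.
- exact: mulr_ge0.
- by move=> k /PV[_]; rewrite setIid -fineK_probability // lte_fin => /ltW.
- by move=> k j kn jn kj; move/PVV: kj => /(_ kn jn);
    rewrite -fineK_probability // lte_fin => /ltW.
set c := n%:R * r; set Phi := \sum_(1 <= k < n.+1) phi k.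
have Phi_le : C3 * c * Phi <= C3 * c * (C1 * c).
  by rewrite ler_wpM2l // mulr_ge0 // (le_trans ler01).
have c_le : C2 * c <= C2 * c ^+ 2.
  by rewrite expr2 mulrA ler_peMr // mulr_ge0 // (le_trans ler01).
have -> : n%:R * (C2 * r + 2 * (C3 * r) * Phi) = C2 * c + 2 * (C3 * c * Phi).
  by rewrite /c; ring.
have -> : (C2 + 2 * C1 * C3) * c ^+ 2 = C2 * c ^+ 2 + 2 * (C3 * c * (C1 * c)).
  by ring.
lra.
Qed.

End correlated_events.

Theorem lemma5p6 (R : realType) (C1 C2 C3 : R) :
  0 < C1 -> 0 < C2 -> 0 < C3 ->
  exists gamma delta N0 : R, [/\ 0 < gamma, 0 < delta, 0 < N0 &
    forall n : nat, N0 < n%:R ->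
    forall (rho : nat -> R), (forall m, 0 < rho m) -> (n%:R)^-1 < rho n ->
    forall (phi : nat -> R), (forall k, 0 < phi k) ->
      \sum_(1 <= k < n.+1) phi k < C1 * n%:R * rho n ->
    forall (d : measure_display) (T : measurableType d)
           (P : probability T R) (V : nat -> set T),
      (forall l, measurable (V l)) ->
      (forall l, (1 <= l <= n)%N ->
         ((C2^-1 * rho n)%:E <= P (V l))%E /\ (P (V l) < (C2 * rho n)%:E)%E) ->
      (forall k j, (1 <= k <= n)%N -> (1 <= j <= n)%N -> k <> j ->
         (P (V k `&` V j) < (C3 * rho n * phi `|(k%:Z - j%:Z)|%N)%:E)%E) ->
      (delta%:E < P [set w | (gamma * n%:R * rho n <
                               \sum_(1 <= l < n.+1) \1_(V l) w)%R])%E].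
Proof.
move=> C1_gt0 C2_gt0 C3_gt0.
pose g := (2 * C2)^-1; pose K := C2 + 2 * C1 * C3.
have g_gt0 : 0 < g by rewrite invr_gt0 mulr_gt0.
have K_gt0 : 0 < K by rewrite addr_gt0 ?mulr_gt0.
exists g, (g ^+ 2 / (2 * K)), 1; split => //.
  by rewrite divr_gt0 ?exprn_gt0 ?mulr_gt0.
move=> n n_gt1 rho rho_gt0 rho_n_gt phi phi_gt0 phi_sum d T P V mV PV PVV.
have n_gt0 : 0 < n%:R :> R by apply: lt_trans n_gt1.
set c := n%:R * rho n.
have c_gt1 : 1 < c by rewrite -(ltr_pM2l n_gt0) mulfV ?gt_eqF in rho_n_gt.
have c_gt0 : 0 < c := lt_trans ltr01 c_gt1.
have first_moment : 2 * (g * c) <= \sum_(1 <= l < n.+1) fine (P (V l)).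
  have -> : 2 * (g * c) = n%:R * (C2^-1 * rho n).
    by rewrite /g /c; field; rewrite gt_eqF.
  exact: sum_prob_ge.
have phi_sum_le : \sum_(1 <= k < n.+1) phi k <= C1 * c by rewrite /c mulrA ltW.
have second_moment := sum_prob_pair_le mV PV PVV C1 (ltW C2_gt0) (ltW C3_gt0)
  (ltW (rho_gt0 n)) (fun k => ltW (phi_gt0 k)) (ltW c_gt1) phi_sum_le.
have tail := second_moment_method P _ mV _ _ (mulr_gt0 g_gt0 c_gt0)
  (mulr_gt0 K_gt0 (exprn_gt0 2 c_gt0)) first_moment second_moment.
rewrite -mulrA -fineK_probability ?lte_fin; last exact: measurable_sum_indic_gt.
apply: lt_le_trans tail.
have -> : (g * c) ^+ 2 / (K * c ^+ 2) = g ^+ 2 / K by field; rewrite !gt_eqF.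
rewrite ltr_pM2l ?exprn_gt0 // ltf_pV2 ?posrE ?mulr_gt0 //.
by rewrite ltr_pMl // ltr1n.
Qed.
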